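(* Let $(W,S)$ be the Weyl group and set of simple reflections of a complex semisimple algebraic group. Suppose $\mathbf s=(s_1,\ldots,s_q)$ is a tuple of elements of $S$ with $H_{s_1}\cdots H_{s_q}=H_w$, where $w\in W$ is fully commutative, and suppose $q>l(w)$. Then there exist $i<j$ such that $s_i=s_j$ and $s_i$ commutes with $s_k$ for every $k$ with $i<k<j$.
   Context: The $0$-Hecke algebra has basis $H_u$ ($u\in W$), $H_1$ the identity, and $H_sH_u=H_{su}$ if $l(su)>l(u)$, $H_sH_u=H_u$ if $l(su)<l(u)$ ($s\in S$). An element $w\in W$ is fully commutative if any reduced expression for $w$ can be obtained from any other by using only the relations $st=ts$ for commuting $s,t\in S$. *)

From mathcomp Require Import all_boot all_fingroup.
Set Implicit Arguments. Unset Strict Implicit. Unset Printing Implicit Defensive.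
Local Open Scope group_scope.

Section Coxeter.
Variable gT : finGroupType.
Variable S : {set gT}.

Definition wprod (u : seq gT) : gT := \prod_(x <- u) x.

Definition Sword (u : seq gT) : bool := all (fun x => x \in S) u.

(* The congruence on words over S generated by the Coxeter relations
   s s = 1 and (s t)^{m(s,t)} = 1, where m(s,t) = #[s * t] is the order of
   s t in the group.  Since all generators are involutions the monoid
   presented this way is the group presented by <S | s^2, (st)^m(s,t)>. *)
Inductive coxcong : seq gT -> seq gT -> Prop :=
| cc_refl u : coxcong u u
| cc_sym u v : coxcong u v -> coxcong v u
| cc_trans u v x : coxcong u v -> coxcong v x -> coxcong u x
| cc_ctx a b u v : coxcong u v -> coxcong (a ++ u ++ b) (a ++ v ++ b)
| cc_sq s : s \in S -> coxcong [:: s; s] [::]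
| cc_braid s t : s \in S -> t \in S ->
    coxcong (flatten (nseq #[s * t] [:: s; t])) [::].

(* (W, S) is a Coxeter system: S consists of involutions generating W and W
   is presented by the Coxeter relations (any two words over S with the same
   product are equal modulo the relations). *)
Definition coxeter_system : Prop :=
  [/\ <<S>> = [set: gT],
      (forall s, s \in S -> #[s] = 2%N) &
      (forall u v, Sword u -> Sword v -> wprod u = wprod v -> coxcong u v)].

(* Weyl group of a complex semisimple algebraic group = finite crystallographic
   Coxeter system: W finite (finGroupType) and m(s,t) in {2,3,4,6} for s <> t. *)
Definition weyl_system : Prop :=
  coxeter_system /\
  (forall s t, s \in S -> t \in S -> s != t -> #[s * t] \in [:: 2; 3; 4; 6]%N).

Definition has_word (w : gT) (n : nat) : bool :=
  [exists t : n.-tuple gT, Sword t && (wprod t == w)].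

(* length function l(w): least n such that w is a product of n elements of S
   (a reduced word has pairwise distinct prefix products, so its length is
   < #|gT|; the search range is thus sufficient when S generates). *)
Definition coxlen (w : gT) : nat := find (has_word w) (iota 0 #|gT|.+1).

(* left multiplication of the basis element H_u by H_s in the 0-Hecke algebra:
   H_s H_u = H_{su} if l(su) > l(u), and H_u otherwise. *)
Definition hmul (s u : gT) : gT :=
  if (coxlen u < coxlen (s * u))%N then s * u else u.

(* H_{s_1} ... H_{s_q} = H_{hecke_prod [:: s_1; ...; s_q]} *)
Definition hecke_prod (u : seq gT) : gT := foldr hmul 1 u.

Definition reduced_word (w : gT) (u : seq gT) : Prop :=
  [/\ Sword u, wprod u = w & size u = coxlen w].

Inductive comm_step : seq gT -> seq gT -> Prop :=
| cs_swap a b s t : s \in S -> t \in S -> s * t = t * s ->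
    comm_step (a ++ [:: s; t] ++ b) (a ++ [:: t; s] ++ b).

Inductive comm_equiv : seq gT -> seq gT -> Prop :=
| ce_refl u : comm_equiv u u
| ce_step u v x : comm_step u v -> comm_equiv v x -> comm_equiv u x.

Definition fully_commutative (w : gT) : Prop :=
  forall u v, reduced_word w u -> reduced_word w v -> comm_equiv u v.

End Coxeter.

From mathcomp Require Import all_boot all_fingroup.
From mathcomp Require Import zify.
Set Implicit Arguments. Unset Strict Implicit. Unset Printing Implicit Defensive.

(* Let [a] be the last letter at which the 0-Hecke product of the word fails
   to grow, and [u] the Hecke product of the (reduced) suffix [v] after it, so
   that [l(a u) < l(u)]; by the parity of Coxeter relations [l(u) = l(a u) + 1],
   so [u] also has a reduced word [a r].  The prefix acts on [u] as left
   multiplication by some [x] with [l(x u) = l(x) + l(u)], hence [w = x u] has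
   the reduced words [p v] and [p a r].  Full commutativity makes them
   commutation equivalent, and commutation moves preserve the subword on any
   two letters that do not commute; so the first letter of [v] that is [a] or
   does not commute with [a] must be [a] itself. *)

Local Open Scope group_scope.

Section CoxeterLength.
Variables (gT : finGroupType) (S : {set gT}).
Local Notation len := (coxlen S).

Lemma wprod_nil : wprod [::] = 1 :> gT.
Proof. by rewrite /wprod big_nil. Qed.

Lemma wprod_cons (a : gT) v : wprod (a :: v) = a * wprod v.
Proof. by rewrite /wprod big_cons. Qed.

Lemma wprod_cat (u v : seq gT) : wprod (u ++ v) = wprod u * wprod v.
Proof. by rewrite /wprod big_cat. Qed.

Lemma Sword_cat (u v : seq gT) : Sword S (u ++ v) = Sword S u && Sword S v.
Proof. exact: all_cat. Qed.

Lemma has_wordP w n :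
  reflect (exists v, [/\ Sword S v, size v = n & wprod v = w]) (has_word S w n).
Proof.
apply: (iffP existsP) => [[t /andP [hS /eqP <-]] | [v [hS <- <-]]].
  by exists (val t); rewrite size_tuple.
by exists (in_tuple v); rewrite /= hS eqxx.
Qed.

(* Two prefixes of a word longer than #|gT| have the same product; cutting out
   the factor between them keeps the product. *)
Lemma wprod_shorter v : Sword S v -> #|gT| < size v ->
  exists v', [/\ Sword S v', wprod v' = wprod v & size v' < size v].
Proof.
move=> hS hlong; pose f (k : 'I_(size v).+1) := wprod (take k v).
have /injectivePn [k1 [k2 hne hf]] : ~~ injectiveb f.
  apply: contraTN hlong => /injectiveP /leq_card; rewrite card_ord -leqNgt.
  exact: ltnW.
wlog lt12 : k1 k2 hne hf / k1 < k2.
  move=> hwlog; case: (ltngtP k1 k2) => [|h21|/val_inj eq12]; first exact: hwlog.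
  - by apply: hwlog h21; rewrite 1?eq_sym.
  - by rewrite eq12 eqxx in hne.
have hk2 : k2 <= size v by rewrite -ltnS.
exists (take k1 v ++ drop k2 v); split.
- by apply/allP => y; rewrite mem_cat => /orP [/mem_take | /mem_drop]; apply/allP.
- by rewrite wprod_cat -[in RHS](cat_take_drop k2 v) wprod_cat; congr (_ * _).
- by rewrite size_cat size_takel ?size_drop; lia.
Qed.

Lemma wprod_short_word v : Sword S v ->
  exists v', [/\ Sword S v', wprod v' = wprod v, size v' <= size v
     & size v' <= #|gT|].
Proof.
elim: {v}(size v).+1 {-2}v (ltnSn (size v)) => // n IH v hn hS.
have [hle | hlong] := leqP (size v) #|gT|; first by exists v.
have [v' [hS' <- hsz]] := wprod_shorter hS hlong.
have [v'' [? <- ? ?]] := IH v' (leq_trans hsz hn) hS'.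
by exists v''; split=> //; lia.
Qed.

Lemma coxlen_le w n : n <= #|gT| -> has_word S w n -> len w <= n.
Proof.
move=> hn hw; rewrite leqNgt; apply/negP => /(before_find 0%N).
by rewrite nth_iota ?ltnS // add0n hw.
Qed.

Lemma coxlen_wprod_le v : Sword S v -> len (wprod v) <= size v.
Proof.
move=> /wprod_short_word [v' [hS' <- hsz hbound]].
by apply: leq_trans hsz; apply: coxlen_le => //; apply/has_wordP; exists v'.
Qed.

Lemma coxlen1 : len 1 = 0%N.
Proof. by have := @coxlen_wprod_le [::] isT; rewrite wprod_nil leqn0 => /eqP. Qed.

Lemma coxlen_gen_le1 a : a \in S -> len a <= 1.
Proof.
move=> ha; have := @coxlen_wprod_le [:: a].
by rewrite wprod_cons wprod_nil mulg1 /Sword /= ha; apply.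
Qed.

Lemma reduced_word_cat x y p q : reduced_word S x p -> reduced_word S y q ->
  len (x * y) = len x + len y -> reduced_word S (x * y) (p ++ q).
Proof.
move=> [hp <- lp] [hq <- lq] hlen.
by split; rewrite ?Sword_cat ?hp ?wprod_cat // size_cat lp lq.
Qed.

Lemma reduced_word_cons a y r : a \in S -> reduced_word S y r ->
  len (a * y) = (len y).+1 -> reduced_word S (a * y) (a :: r).
Proof. by move=> ha [hr <- lr] hlen; split; rewrite ?wprod_cons //= ?ha ?lr. Qed.

Lemma hecke_prod_reduced_or_descent v : Sword S v ->
  reduced_word S (hecke_prod S v) v \/
  exists v1 a v2, [/\ v = v1 ++ a :: v2, a \in S,
    reduced_word S (hecke_prod S v2) v2 &
    ~~ (len (hecke_prod S v2) < len (a * hecke_prod S v2))].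
Proof.
elim: v => [|a v IH] hS.
  by left; split; rewrite ?wprod_nil ?coxlen1.
have /andP [ha /IH [hred | [v1 [b [v2 [-> hb hv2 hdesc]]]]]] := hS; last first.
  by right; exists (a :: v1), b, v2.
rewrite /hecke_prod /= -/(hecke_prod S v) /hmul.
case: ifP => hgt; last by right; exists [::], a, v; rewrite hgt.
left; apply: (reduced_word_cons ha hred); case: hred => _ hw hl.
have := coxlen_wprod_le hS; rewrite wprod_cons hw /= hl => hle.
by apply/eqP; rewrite eqn_leq hle.
Qed.

Lemma coxcong_odd_size u v : coxcong S u v -> odd (size u) = odd (size v).
Proof.
elim=> //.
- by move=> ? ? ? _ -> _ ->.
- by move=> a b ? ? _ e; rewrite !size_cat !oddD e.
- by move=> s t _ _; elim: #[s * t] => //= m IH; rewrite negbK.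
Qed.

Section Generated.
Hypothesis hgen : <<S>> = [set: gT].

Lemma exists_short_word w : exists v, [/\ Sword S v, wprod v = w & size v <= #|gT|].
Proof.
have : w \in <<S>> by rewrite hgen inE.
case/gen_prodgP => n [c hc ->].
have hS : Sword S [seq c i | i <- enum 'I_n].
  by apply/allP => x /mapP [i _ ->]; apply: hc.
have [v [hv hwv _ hsz]] := wprod_short_word hS.
by exists v; rewrite hwv /wprod big_map enumT unlock.
Qed.

Lemma reduced_word_exists w : exists v, reduced_word S w v.
Proof.
have [v [hv hw hsz]] := exists_short_word w.
have hhas : has (has_word S w) (iota 0 #|gT|.+1).
  apply/hasP; exists (size v); first by rewrite mem_iota add0n ltnS.
  by apply/has_wordP; exists v.
have := nth_find 0%N hhas; rewrite has_find size_iota in hhas.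
by rewrite nth_iota // add0n => /has_wordP [v' [? ? ?]]; exists v'.
Qed.

Lemma coxlenM x y : len (x * y) <= len x + len y.
Proof.
have [p [hp <- <-]] := reduced_word_exists x.
have [q [hq <- <-]] := reduced_word_exists y.
by rewrite -wprod_cat -size_cat; apply: coxlen_wprod_le; rewrite Sword_cat hp.
Qed.

Lemma coxlen_mul_gen_le a u : a \in S -> len (a * u) <= (len u).+1.
Proof.
by move=> ha; apply: leq_trans (coxlenM a u) (leq_add (coxlen_gen_le1 ha) (leqnn _)).
Qed.

(* Each step of the 0-Hecke action multiplies on the left by a generator only
   when this increases the length. *)
Lemma foldr_hmul_lenD u v : Sword S v ->
  exists x, foldr (hmul S) u v = x * u /\ len (x * u) = len x + len u.
Proof.
elim: v => [|a v IH] /=; first by exists 1; rewrite mul1g coxlen1.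
case/andP => ha /IH [x [-> hx]]; rewrite /hmul.
case: ifP => [hgt | _]; last by exists x.
exists (a * x); rewrite mulgA; split=> //.
have assoc : len (a * (x * u)) = len (a * x * u) by rewrite mulgA.
have hax : len (a * x) <= (len x).+1 := coxlen_mul_gen_le x ha.
by have := coxlenM (a * x) u; lia.
Qed.

Section Presented.
Hypothesis hinv : forall a, a \in S -> a * a = 1.
Hypothesis hpres : forall u v, Sword S u -> Sword S v -> wprod u = wprod v ->
  coxcong S u v.

Lemma coxlen_mul_gen a u : a \in S ->
  len (a * u) = (len u).+1 \/ len u = (len (a * u)).+1.
Proof.
move=> ha; have [r [hr hwr lr]] := reduced_word_exists u.
have [r' [hr' hwr' lr']] := reduced_word_exists (a * u).
have hodd : odd (len u).+1 = odd (len (a * u)).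
  rewrite -lr -lr'; apply: (@coxcong_odd_size (a :: r)); apply: hpres => //.
    by rewrite /Sword /= ha.
  by rewrite wprod_cons hwr hwr'.
have hne : len (a * u) != len u.
  by apply/eqP => e; move: hodd; rewrite e /=; case: odd.
have hle1 : len (a * u) <= (len u).+1 := coxlen_mul_gen_le u ha.
have hle2 : len u <= (len (a * u)).+1.
  by have := coxlen_mul_gen_le (a * u) ha; rewrite mulgA hinv // mul1g.
lia.
Qed.

End Presented.
End Generated.

Lemma comm_equiv_filter (P : pred gT) u v :
  (forall s t, P s -> P t -> s * t = t * s -> s = t) ->
  comm_equiv S u v -> filter P u = filter P v.
Proof.
move=> hP; elim=> // {}u {}v x hstep _ <-; case: hstep => a b s t _ _ hst.
rewrite !filter_cat /=; case Ps: (P s); case Pt: (P t) => //.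
by rewrite (hP s t).
Qed.

(* The first letter [c] of [v] that is [a] or does not commute with [a] is [a]:
   otherwise the subwords of both sides on the letters [a] and [c], which
   commutation moves preserve, would start with [c] and with [a]. *)
Lemma comm_equiv_head_split p v a r : comm_equiv S (p ++ v) (p ++ a :: r) ->
  exists v1 v2, v = v1 ++ a :: v2 /\ all (fun y => a * y == y * a) v1.
Proof.
move=> hce.
have hfilter (P : pred gT) : (forall s t, P s -> P t -> s * t = t * s -> s = t) ->
    filter P v = filter P (a :: r).
  move=> hP; move/eqP: (comm_equiv_filter hP hce).
  by rewrite !filter_cat eqseq_cat // eqxx => /eqP.
pose q y := (y == a) || (a * y != y * a).
have [hq | hnq] := boolP (has q v); last first.
  have hav : a \notin v.
    by apply: contra hnq => hav; apply/hasP; exists a; rewrite // /q eqxx.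
  have ha1 s t : pred1 a s -> pred1 a t -> s * t = t * s -> s = t.
    by move=> /eqP -> /eqP ->.
  have := congr1 size (hfilter _ ha1).
  by rewrite !size_filter /= eqxx (count_memPn hav).
move: hfilter; case: (split_find hq) => c v1 v2 qc hnq1 hfilter.
have hcomm1 : all (fun y => a * y == y * a) v1.
  by apply/allP => y /(hasPn hnq1); rewrite /q negb_or negbK => /andP [_ ->].
have [-> | hca] := eqVneq c a; first by exists v1, v2; rewrite cat_rcons.
have hac : a * c != c * a by move: qc; rewrite /q (negbTE hca).
pose P y := (y == a) || (y == c).
have hP s t : P s -> P t -> s * t = t * s -> s = t.
  by case/orP=> /eqP -> /orP [] /eqP -> // hst; case/eqP: hac.
have hnP1 : ~~ has P v1.
  apply/hasPn => y /(hasPn hnq1); rewrite /q /P !negb_or negbK => /andP [-> hay] /=.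
  by apply: contraTneq hay => ->.
move: (hfilter P hP); rewrite cat_rcons filter_cat.
move: hnP1; rewrite has_filter negbK => /eqP ->.
by rewrite /= /P !eqxx orbT => -[] /eqP; rewrite (negbTE hca).
Qed.

Lemma nth_repeat_commuting (s v1 v v' : seq gT) a : s = v1 ++ a :: v ++ a :: v' ->
  all (fun y => a * y == y * a) v ->
  exists i j, [/\ i < j < size s, nth 1 s i = nth 1 s j &
    forall k, i < k < j -> nth 1 s i * nth 1 s k = nth 1 s k * nth 1 s i].
Proof.
move=> -> hcomm.
have nth_s t m : nth 1 (v1 ++ t) (size v1 + m) = nth 1 t m.
  by rewrite nth_cat ltnNge leq_addr /= addKn.
have nth_a : nth 1 (v1 ++ a :: v ++ a :: v') (size v1) = a.
  by rewrite nth_cat ltnn subnn.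
exists (size v1), (size v1 + (size v).+1); rewrite nth_a; split.
- by rewrite size_cat /= size_cat /=; lia.
- by rewrite nth_s /= nth_cat ltnn subnn.
- move=> k /andP [hk1 hk2]; have hk : k - size v1 - 1 < size v by lia.
  have -> : k = size v1 + (k - size v1 - 1).+1 by lia.
  by rewrite nth_s /= nth_cat hk; apply/eqP; move/all_nthP: hcomm; apply.
Qed.

End CoxeterLength.

Theorem proposition3p4 (gT : finGroupType) (S : {set gT})
  (hW : weyl_system S) (w : gT) (s : seq gT)
  (hs : Sword S s) (hH : hecke_prod S s = w)
  (hfc : fully_commutative S w) (hq : (coxlen S w < size s)%N) :
  exists i j : nat, [/\ (i < j < size s)%N,
    nth 1%g s i = nth 1%g s j &
    forall k : nat, (i < k < j)%N ->
      (nth 1%g s i * nth 1%g s k = nth 1%g s k * nth 1%g s i)%g].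
Proof.
have [[hgen hord hpres] _] := hW.
have hinv a : a \in S -> a * a = 1 by move/hord => ha; rewrite -expg2 -ha expg_order.
have [[_ _ hsz] | [v1 [a [v2 [es ha hv2 hdesc]]]]] := hecke_prod_reduced_or_descent hs.
  by rewrite hsz hH ltnn in hq.
set u := hecke_prod S v2 in hv2 hdesc.
have hlu : coxlen S u = (coxlen S (a * u)).+1.
  by case: (coxlen_mul_gen hgen hinv hpres u ha) => // h; rewrite h ltnSn in hdesc.
have hv1 : Sword S v1 by move: hs; rewrite es Sword_cat => /andP [].
have [x [hxu hlen]] := foldr_hmul_lenD hgen u hv1.
have hau_fixed : hmul S a u = u by rewrite /hmul (negbTE hdesc).
have hw : w = x * u.
  by rewrite -hH es /hecke_prod foldr_cat /= -/(hecke_prod S v2) -/u hau_fixed.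
have [p hp] := reduced_word_exists hgen x.
have [r hr] := reduced_word_exists hgen (a * u).
have hau : reduced_word S u (a :: r).
  by have := reduced_word_cons ha hr; rewrite mulgA hinv // mul1g; apply.
have hce : comm_equiv S (p ++ v2) (p ++ a :: r).
  by apply: hfc; rewrite hw; apply: reduced_word_cat.
have [v1' [v2' [ev2 hcomm]]] := comm_equiv_head_split hce.
by apply: (nth_repeat_commuting _ hcomm); rewrite es ev2.
Qed.
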